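(* Let $g$ be an $n$-person WTT game form, $i\in[n]$, and let $\ell,j,k$ be three distinct elements of $X_i$ such that $H_\ell\stackrel{c}{\Longrightarrow}H_j$ and $H_\ell\stackrel{d}{\Longrightarrow}H_k$ for some outcomes $c,d\in A$. Then $c=d$.
   Context: Let $X_1,\dots,X_n$ and $A$ be finite nonempty sets. An $n$-person game form is a map $g: X_1\times\cdots\times X_n\to A$; elements of $X=X_1\times\cdots\times X_n$ are strategy profiles, elements of $A$ are outcomes. For a direction $i\in[n]$ write $X_{-i}=\prod_{t\neq i}X_t$, and for $s\in X_i$, $y\in X_{-i}$ write $(s,y)$ for the profile with $i$-th coordinate $s$ and other coordinates $y$. The hyperplane perpendicular to direction $i$ at $s\in X_i$ is $H_s=\{x\in X: x_i=s\}$. $g$ is weakly totally tight (WTT) if for every $i\in[n]$, all $s\neq s'$ in $X_i$ and all $y\neq y'$ in $X_{-i}$, at least one of $g(s,y)=g(s,y')$, $g(s,y)=g(s',y)$, $g(s',y')=g(s',y)$, $g(s',y')=g(s,y')$ holds. For a direction $i$ and distinct $j,k\in X_i$, set $H_j^{\neq}(k)=\{(j,y): y\in X_{-i},\ g(j,y)\neq g(k,y)\}$. We write $H_j\stackrel{c}{\longrightarrow}H_k$ if $g(x)=c$ for all $x\in H_j^{\neq}(k)$; we write $H_j\stackrel{c}{\Longrightarrow}H_k$ if $H_j\stackrel{c}{\longrightarrow}H_k$ and there is no outcome $d$ with $H_k\stackrel{d}{\longrightarrow}H_j$. *)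

From mathcomp Require Import all_boot.
Set Implicit Arguments. Unset Strict Implicit. Unset Printing Implicit Defensive.

Section GameForm.
Variables (n : nat) (X : 'I_n -> finType) (A : finType).

Definition profile := {dffun forall t : 'I_n, X t}.

Definition others (i : 'I_n) := {dffun forall t : {t : 'I_n | t != i}, X (val t)}.

(* the profile (s, y) with i-th coordinate s and other coordinates y *)
Definition join (i : 'I_n) (s : X i) (y : others i) : profile :=
  [ffun t => match eqVneq t i with
             | EqNotNeq e => ecast u (X u) (esym e) s
             | NeqNotEq ne => y (exist _ t ne)
             end].

Variable g : profile -> A.

Definition WTT : Prop :=
  forall (i : 'I_n) (s s' : X i) (y y' : others i),
    s <> s' -> y <> y' ->
    g (join s y) = g (join s y') \/ g (join s y) = g (join s' y) \/
    g (join s' y') = g (join s' y) \/ g (join s' y') = g (join s y').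

(* H_j -c-> H_k : g(x) = c for all x in H_j^{<>}(k), i.e. for all y with
   g(j,y) <> g(k,y) we have g(j,y) = c. *)
Definition arrow (i : 'I_n) (j k : X i) (c : A) : Prop :=
  forall y : others i, g (join j y) <> g (join k y) -> g (join j y) = c.

Definition darrow (i : 'I_n) (j k : X i) (c : A) : Prop :=
  arrow j k c /\ ~ (exists d : A, arrow k j d).

End GameForm.

From mathcomp Require Import all_boot.
From Stdlib Require Import Classical.
Set Implicit Arguments. Unset Strict Implicit. Unset Printing Implicit Defensive.

(* Suppose c <> d. Since H_j -/-> H_l, some y has g(j,y) <> g(l,y) and
   g(j,y) <> d; then g(l,y) = c and, as c <> d, H_l -d-> H_k forces
   g(k,y) = c. Symmetrically some z has g(k,z) <> g(l,z), g(k,z) <> c,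
   g(l,z) = d and g(j,z) = d. Tightness of the 2x2 minor on rows j, k and
   columns y, z then fails in each of its four cases. *)

Section Arrows.
Variables (n : nat) (X : 'I_n -> finType) (A : finType) (g : profile X -> A).
Variable i : 'I_n.

Lemma arrow_off_value (j k : X i) (c : A) (y : others X i) :
  arrow g j k c -> g (join j y) <> c -> g (join k y) = g (join j y).
Proof.
move=> hjk hc; case: (eqVneq (g (join j y)) (g (join k y))) => [-> //|].
by move=> /eqP /hjk.
Qed.

Lemma not_arrow_witness (j k : X i) (d : A) :
  ~ (exists e, arrow g j k e) ->
  exists y, g (join j y) <> g (join k y) /\ g (join j y) <> d.
Proof.
move=> no_arrow; apply: NNPP => no_witness; apply: no_arrow; exists d => y hy.
by apply: NNPP => hd; apply: no_witness; exists y.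
Qed.

End Arrows.

Theorem mainTheorem4 (n : nat) (X : 'I_n -> finType) (A : finType)
  (g : profile X -> A)
  (XnE : forall t : 'I_n, 0 < #|X t|) (AnE : 0 < #|A|)
  (hW : WTT g) (i : 'I_n) (l j k : X i)
  (hlj : l != j) (hlk : l != k) (hjk : j != k) (c d : A) :
  darrow g l j c -> darrow g l k d -> c = d.
Proof.
move=> [arr_lj no_jl] [arr_lk no_kl]; apply: NNPP => cd.
have [y [jy_ly jy_d]] := not_arrow_witness d no_jl.
have [z [kz_lz kz_c]] := not_arrow_witness c no_kl.
have ly : g (join l y) = c by apply: arr_lj => /esym.
have lz : g (join l z) = d by apply: arr_lk => /esym.
have ky : g (join k y) = c by rewrite (arrow_off_value arr_lk) // ly.
have jz : g (join j z) = d by rewrite (arrow_off_value arr_lj) // lz => /esym.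
have yz : y <> z by move=> eyz; apply: cd; rewrite -ly -lz eyz.
have [|[|[|]]] := hW i j k y z (elimN eqP hjk) yz; rewrite ?jz ?ky.
- exact: jy_d.
- by rewrite -ly.
- exact: kz_c.
- by rewrite -lz.
Qed.
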